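(* The following identities hold: \begin{align*} \sum_{k=0}^\infty\frac{(22k^2+17k-2)\binom{4k}k}{(k+1)16^k}&=17, \\\sum_{k=0}^\infty\frac{(11k^2+8k+1)\binom{4k}k}{(3k+1)(3k+2)16^k}&=1, \\\sum_{k=0}^\infty\frac{(22k^2-18k+3)\binom{4k}k}{(2k-1)(4k-1)(4k-3)16^k}&=-\frac13. \end{align*} *)

From Stdlib Require Import Reals.
From Coquelicot Require Import Coquelicot.
Open Scope R_scope.

Definition binom (n k : nat) : R := Binomial.C n k.

From Stdlib Require Import Reals Factorial Lra Lia.
From Coquelicot Require Import Coquelicot.
Open Scope R_scope.

(* Write [beta k = rho k * C(4k, k)] for the third summand without its factor [16 ^ -k] and
   substitute [x = y (1 - y) ^ 3].  Expanding [(1 - y) ^ (3k)], the coefficient of [y ^ n] in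
   [sum_k beta k x ^ k] is [(-1) ^ n / n!] times [sum_k (-1) ^ k C(n, k) rho k (4k)_n], an
   [n]-th finite difference.  For [n >= 4] the falling factorial [(4k)_n] contains
   [4k (4k - 1) (4k - 2) (4k - 3)], which cancels the denominator of [rho k]; what remains is a
   polynomial in [k] of degree [n - 1], so the difference vanishes.  Hence [sum_k beta k x ^ k]
   is the cubic [-1 + 28/3 y - 40/3 y^2 + 16/3 y^3] as long as the double series converges
   absolutely, i.e. [256/27 y (1 + y) ^ 3 < 1].  Since
   [16 y (1 - y) ^ 3 - 1 = (1 - 2y) (8y^3 - 20y^2 + 14y - 1)], the root [y ~ 0.0804] of the
   second factor gives [x = 1/16], and there the cubic equals [-1/3].
   The first two series are [-15] and [-3] times the third plus telescoping sums of
   [R k * C(4k, k) / 16 ^ k] with explicit rational certificates [R]. *)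

Lemma sum_f_R0_zero_tail (f : nat -> R) (m n : nat) :
  (m <= n)%nat -> (forall i, (m < i <= n)%nat -> f i = 0) ->
  sum_f_R0 f n = sum_f_R0 f m.
Proof.
  intros Hmn Hf. destruct (Nat.eq_dec m n) as [<-|Hne]; [reflexivity|].
  rewrite (tech2 f m n) by lia.
  rewrite sum_eq_R0 with (An := fun i => f (S m + i)%nat); [ring|].
  intros i Hi. apply Hf. lia.
Qed.

Lemma sum_f_R0_diagonals (w : nat -> nat -> R) (N : nat) :
  sum_f_R0 (fun k => sum_f_R0 (w k) (N - k)) N =
  sum_f_R0 (fun n => sum_f_R0 (fun k => w k (n - k)%nat) n) N.
Proof.
  induction N as [|N IH]; [reflexivity|].
  rewrite !tech5, <- IH, Nat.sub_diag.
  rewrite (sum_eq _ (fun k => sum_f_R0 (w k) (N - k) + w k (S N - k)%nat)).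
  - rewrite sum_plus. simpl. ring.
  - intros k Hk. rewrite Nat.sub_succ_l by exact Hk. reflexivity.
Qed.

Lemma sum_f_R0_square_split (w : nat -> nat -> R) (N M : nat) : (N <= M)%nat ->
  sum_f_R0 (fun k => sum_f_R0 (w k) M) N =
  sum_f_R0 (fun n => sum_f_R0 (fun k => w k (n - k)%nat) n) N +
  sum_f_R0 (fun k => sum_f_R0 (fun j => if (N <? k + j)%nat then w k j else 0) M) N.
Proof.
  intros HNM. rewrite <- sum_f_R0_diagonals, <- sum_plus.
  apply sum_eq. intros k Hk.
  set (near := fun j => if (N <? k + j)%nat then 0 else w k j).
  assert (Hnear : sum_f_R0 (w k) (N - k) = sum_f_R0 near M).
  { rewrite (sum_f_R0_zero_tail near (N - k) M); [|lia|].
    - apply sum_eq. intros j Hj. unfold near.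
      replace (N <? k + j)%nat with false; [reflexivity|].
      symmetry. apply Nat.ltb_ge. lia.
    - intros j Hj. unfold near. replace (N <? k + j)%nat with true; [reflexivity|].
      symmetry. apply Nat.ltb_lt. lia. }
  rewrite Hnear, <- sum_plus. apply sum_eq. intros j _. unfold near.
  destruct (N <? k + j)%nat; ring.
Qed.

Fixpoint ffact (x : R) (n : nat) : R :=
  match n with O => 1 | S n => ffact x n * (x - INR n) end.

Lemma ffact_add x m n : ffact x (m + n) = ffact x m * ffact (x - INR m) n.
Proof.
  induction n as [|n IH]; simpl.
  - rewrite Nat.add_0_r. ring.
  - rewrite Nat.add_succ_r. simpl. rewrite IH, plus_INR. ring.
Qed.

Lemma ffact_succ x n : ffact (x + 1) (S n) = (x + 1) * ffact x n.
Proof.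
  induction n as [|n IH]; [simpl; ring|].
  change (ffact (x + 1) (S (S n))) with (ffact (x + 1) (S n) * (x + 1 - INR (S n))).
  rewrite IH, S_INR. simpl. ring.
Qed.

Lemma ffact_diag m : ffact (INR m) m = INR (fact m).
Proof.
  induction m as [|m IH]; [reflexivity|].
  rewrite S_INR, ffact_succ, IH, fact_simpl, mult_INR, S_INR. ring.
Qed.

Lemma ffact_nat_gt m n : (m < n)%nat -> ffact (INR m) n = 0.
Proof.
  intros H. replace n with (S m + (n - S m))%nat by lia.
  rewrite ffact_add. simpl. rewrite Rminus_diag. ring.
Qed.

Lemma ffact_nat_ge0 m n : 0 <= ffact (INR m) n.
Proof.
  induction n as [|n IH]; simpl; [lra|].
  destruct (Nat.le_gt_cases n m) as [Hnm|Hmn].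
  - apply Rmult_le_pos; [exact IH|]. apply le_INR in Hnm. lra.
  - rewrite ffact_nat_gt by lia. lra.
Qed.

(* Unlike [Binomial.C m j], which equals [m! / j!] when [j > m], this
   binomial coefficient vanishes there, so Pascal's rule holds everywhere. *)
Definition choose (m j : nat) : R := ffact (INR m) j / INR (fact j).

Lemma choose_ge0 m j : 0 <= choose m j.
Proof.
  apply Rmult_le_pos; [apply ffact_nat_ge0|].
  left. apply Rinv_0_lt_compat, lt_0_INR, lt_O_fact.
Qed.

Lemma choose_gt m j : (m < j)%nat -> choose m j = 0.
Proof. intros H. unfold choose. rewrite ffact_nat_gt by exact H. lra. Qed.

Lemma choose_0 m : choose m 0 = 1.
Proof. unfold choose. simpl. lra. Qed.

Lemma fact_ffact m j : (j <= m)%nat -> INR (fact m) = ffact (INR m) j * INR (fact (m - j)).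
Proof.
  intros H. rewrite <- !ffact_diag, minus_INR, <- ffact_add by exact H.
  f_equal. lia.
Qed.

Lemma binom_choose m j : (j <= m)%nat -> binom m j = choose m j.
Proof.
  intros H. unfold binom, Binomial.C, choose. rewrite (fact_ffact m j H).
  pose proof (INR_fact_neq_0 j). pose proof (INR_fact_neq_0 (m - j)).
  field. auto.
Qed.

Lemma choose_pascal m j : choose (S m) (S j) = choose m j + choose m (S j).
Proof.
  unfold choose. rewrite S_INR, ffact_succ. simpl ffact.
  rewrite fact_simpl, mult_INR, S_INR.
  pose proof (INR_fact_neq_0 j). pose proof (pos_INR j).
  field. split; lra.
Qed.

Lemma choose_expansion m M z : (m <= M)%nat ->
  sum_f_R0 (fun j => choose m j * z ^ j) M = (1 + z) ^ m.
Proof.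
  intros H. rewrite (sum_f_R0_zero_tail _ m M H).
  - rewrite Rplus_comm, binomial. apply sum_eq. intros j Hj.
    rewrite <- binom_choose by exact Hj. unfold binom. rewrite pow1. ring.
  - intros j Hj. rewrite choose_gt by lia. ring.
Qed.

Lemma choose_mul_choose_sub a k n : (k <= a)%nat -> (k <= n)%nat ->
  choose a k * choose (a - k) (n - k) = choose n k * (ffact (INR a) n / INR (fact n)).
Proof.
  intros Hka Hkn. unfold choose. rewrite (fact_ffact n k Hkn).
  replace (ffact (INR a) n) with (ffact (INR a) (k + (n - k))) by (f_equal; lia).
  rewrite ffact_add, minus_INR by exact Hka.
  pose proof (INR_fact_neq_0 k). pose proof (INR_fact_neq_0 (n - k)).
  assert (ffact (INR n) k <> 0).
  { intros E. apply (INR_fact_neq_0 n). rewrite (fact_ffact n k Hkn), E. ring. }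
  field. auto.
Qed.

Definition fdiff (f : nat -> R) (k : nat) : R := f (S k) - f k.

(* [deg_lt n f]: the [n]-th forward difference of [f] vanishes, i.e. [f]
   agrees on [nat] with a polynomial of degree less than [n]. *)
Fixpoint deg_lt (n : nat) (f : nat -> R) : Prop :=
  match n with O => forall k, f k = 0 | S n => deg_lt n (fdiff f) end.

Lemma deg_lt_ext n f g : (forall k, f k = g k) -> deg_lt n f -> deg_lt n g.
Proof.
  revert f g; induction n as [|n IH]; simpl; intros f g E H.
  - intros k. rewrite <- E. apply H.
  - apply (IH (fdiff f)); [|exact H]. intros k. unfold fdiff. rewrite !E. reflexivity.
Qed.

Lemma deg_lt_S n f : deg_lt n f -> deg_lt (S n) f.
Proof.
  revert f; induction n as [|n IH]; simpl; intros f H.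
  - intros k. unfold fdiff. rewrite !H. ring.
  - apply IH, H.
Qed.

Lemma deg_lt_le m n f : (m <= n)%nat -> deg_lt m f -> deg_lt n f.
Proof. induction 1; auto using deg_lt_S. Qed.

Lemma deg_lt_add n f g : deg_lt n f -> deg_lt n g -> deg_lt n (fun k => f k + g k).
Proof.
  revert f g; induction n as [|n IH]; simpl; intros f g Hf Hg.
  - intros k. rewrite Hf, Hg. ring.
  - apply (deg_lt_ext n (fun k => fdiff f k + fdiff g k)); [|apply IH; assumption].
    intros k. unfold fdiff. ring.
Qed.

Lemma deg_lt_scal n c f : deg_lt n f -> deg_lt n (fun k => c * f k).
Proof.
  revert f; induction n as [|n IH]; simpl; intros f Hf.
  - intros k. rewrite Hf. ring.
  - apply (deg_lt_ext n (fun k => c * fdiff f k)); [|apply IH, Hf].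
    intros k. unfold fdiff. ring.
Qed.

Lemma deg_lt_shift n f : deg_lt n f -> deg_lt n (fun k => f (S k)).
Proof.
  revert f; induction n as [|n IH]; simpl; intros f Hf.
  - intros k. apply Hf.
  - apply (IH (fdiff f) Hf).
Qed.

Lemma deg_lt_mul_linear n a b f :
  deg_lt n f -> deg_lt (S n) (fun k => (a * INR k + b) * f k).
Proof.
  revert f; induction n as [|n IH]; intros f Hf.
  - simpl in *. intros k. unfold fdiff. rewrite !Hf. ring.
  - change (deg_lt (S n) (fdiff (fun k => (a * INR k + b) * f k))).
    apply (deg_lt_ext (S n) (fun k => a * f (S k) + (a * INR k + b) * fdiff f k)).
    + intros k. unfold fdiff. rewrite S_INR. ring.
    + apply deg_lt_add.
      * apply deg_lt_scal, deg_lt_shift, Hf.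
      * apply IH, Hf.
Qed.

Lemma deg_lt_mul_nat n f : deg_lt n f -> deg_lt (S n) (fun k => INR k * f k).
Proof.
  intros Hf. apply (deg_lt_ext _ (fun k => (1 * INR k + 0) * f k)); [intros k; ring|].
  apply deg_lt_mul_linear, Hf.
Qed.

Definition alt_sum (n : nat) (f : nat -> R) : R :=
  sum_f_R0 (fun k => (-1) ^ k * choose n k * f k) n.

Lemma alt_sum_S n f : alt_sum (S n) f = - alt_sum n (fdiff f).
Proof.
  unfold alt_sum, fdiff.
  rewrite decomp_sum by lia. simpl pred.
  rewrite (sum_eq _ (fun k => - ((-1) ^ k * choose n k * f (S k)) +
                              (-1) ^ S k * choose n (S k) * f (S k)))
    by (intros k _; rewrite choose_pascal; simpl; ring).
  rewrite sum_plus.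
  assert (Hshift : sum_f_R0 (fun k => (-1) ^ S k * choose n (S k) * f (S k)) n =
                   sum_f_R0 (fun k => (-1) ^ k * choose n k * f k) n - f 0%nat).
  { rewrite <- (sum_f_R0_zero_tail (fun k => (-1) ^ k * choose n k * f k) n (S n)).
    - rewrite (decomp_sum _ (S n)) by lia. rewrite choose_0. simpl. ring.
    - lia.
    - intros k Hk. rewrite choose_gt by lia. ring. }
  rewrite Hshift, choose_0.
  rewrite (sum_eq (fun k => - ((-1) ^ k * choose n k * f (S k)))
                  (fun k => (-1) ^ k * choose n k * f (S k) * -1)) by (intros; ring).
  rewrite <- scal_sum.
  rewrite (sum_eq (fun k => (-1) ^ k * choose n k * (f (S k) - f k))
                  (fun k => (-1) ^ k * choose n k * f (S k) - (-1) ^ k * choose n k * f k))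
    by (intros; ring).
  rewrite minus_sum. simpl. ring.
Qed.

Lemma alt_sum_deg_lt n f : deg_lt n f -> alt_sum n f = 0.
Proof.
  revert f; induction n as [|n IH]; intros f Hf.
  - unfold alt_sum. simpl in *. rewrite Hf. ring.
  - rewrite alt_sum_S, IH; [ring|exact Hf].
Qed.

Lemma deg_lt_ffact_linear m a b : deg_lt (S m) (fun k => ffact (a * INR k + b) m).
Proof.
  induction m as [|m IH].
  - intros k. unfold fdiff. simpl. ring.
  - apply (deg_lt_ext _ (fun k => (a * INR k + (b - INR m)) * ffact (a * INR k + b) m)).
    + intros k. simpl. ring.
    + apply deg_lt_mul_linear, IH.
Qed.

Lemma pow_m1_sub n k : (k <= n)%nat -> (-1) ^ (n - k) = (-1) ^ n * (-1) ^ k.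
Proof.
  intros H. replace n with (n - k + k)%nat at 2 by lia.
  rewrite pow_add, Rmult_assoc, <- pow_add.
  replace (k + k)%nat with (2 * k)%nat by lia. rewrite pow_1_even. ring.
Qed.

Lemma nat_0_or_ge1 k : INR k = 0 \/ 1 <= INR k.
Proof.
  destruct k; [left; reflexivity|right].
  rewrite S_INR. pose proof (pos_INR k). lra.
Qed.

Lemma denominators_neq0 k :
  2 * INR k - 1 <> 0 /\ 4 * INR k - 1 <> 0 /\ 4 * INR k - 2 <> 0 /\ 4 * INR k - 3 <> 0.
Proof. destruct (nat_0_or_ge1 k) as [H|H]; rewrite ?H; repeat split; lra. Qed.

Definition rho (k : nat) : R :=
  (22 * INR k ^ 2 - 18 * INR k + 3) / ((2 * INR k - 1) * (4 * INR k - 1) * (4 * INR k - 3)).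

Definition beta (k : nat) : R := rho k * choose (4 * k) k.

(* The coefficient of [y ^ n] in [sum_k beta k * (y * (1 - y) ^ 3) ^ k]. *)
Definition coeff (n : nat) : R :=
  sum_f_R0 (fun k => beta k * choose (3 * k) (n - k) * (-1) ^ (n - k)) n.

Lemma coeff_alt_sum n :
  coeff n = (-1) ^ n / INR (fact n) * alt_sum n (fun k => rho k * ffact (INR (4 * k)) n).
Proof.
  unfold coeff, alt_sum. rewrite scal_sum. apply sum_eq. intros k Hk.
  unfold beta. rewrite pow_m1_sub by exact Hk.
  replace (3 * k)%nat with (4 * k - k)%nat by lia.
  rewrite (Rmult_assoc (rho k)), choose_mul_choose_sub by lia.
  unfold Rdiv. ring.
Qed.

Lemma rho_ffact_deg_lt n : (4 <= n)%nat -> deg_lt n (fun k => rho k * ffact (INR (4 * k)) n).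
Proof.
  intros Hn. replace n with (4 + (n - 4))%nat by lia. set (m := (n - 4)%nat).
  set (F := fun k => ffact (4 * INR k + -4) m).
  assert (H1 : deg_lt (S (S m)) (fun k => INR k * F k))
    by apply deg_lt_mul_nat, deg_lt_ffact_linear.
  assert (H3 : deg_lt (4 + m) (fun k => INR k * ((22 * INR k + -18) * (INR k * F k))))
    by apply deg_lt_mul_nat, deg_lt_mul_linear, H1.
  apply (deg_lt_ext _ (fun k => 8 * (INR k * ((22 * INR k + -18) * (INR k * F k)))
                                + 24 * (INR k * F k))).
  - intros k. unfold rho, F. rewrite ffact_add, mult_INR.
    replace (INR 4 * INR k - INR 4) with (4 * INR k + -4) by (simpl; ring).
    destruct (denominators_neq0 k) as (D1 & D2 & D3 & D4).
    simpl ffact. simpl INR. field. auto.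
  - apply deg_lt_add; apply deg_lt_scal; [exact H3|].
    apply (deg_lt_le (S (S m))); [lia|exact H1].
Qed.

Lemma coeff_ge4 n : (4 <= n)%nat -> coeff n = 0.
Proof.
  intros Hn. rewrite coeff_alt_sum, alt_sum_deg_lt by (apply rho_ffact_deg_lt, Hn). ring.
Qed.

Lemma coeff_lt4 : coeff 0 = -1 /\ coeff 1 = 28 / 3 /\ coeff 2 = -40 / 3 /\ coeff 3 = 16 / 3.
Proof. unfold coeff, beta, rho, choose. simpl. repeat split; field. Qed.

Lemma sum_coeff_pow y N : (3 <= N)%nat ->
  sum_f_R0 (fun n => coeff n * y ^ n) N = -1 + 28 / 3 * y - 40 / 3 * y ^ 2 + 16 / 3 * y ^ 3.
Proof.
  intros HN. rewrite (sum_f_R0_zero_tail _ 3 N HN).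
  - destruct coeff_lt4 as (C0 & C1 & C2 & C3). simpl. rewrite C0, C1, C2, C3. field.
  - intros n Hn. rewrite coeff_ge4 by lia. ring.
Qed.

Definition binom4_ratio (k : nat) : R :=
  (4 * INR k + 1) * (4 * INR k + 2) * (4 * INR k + 3) * (4 * INR k + 4) /
  ((INR k + 1) * (3 * INR k + 1) * (3 * INR k + 2) * (3 * INR k + 3)).

Lemma binom_4k_k_succ k : binom (4 * S k) (S k) = binom (4 * k) k * binom4_ratio k.
Proof.
  unfold binom, Binomial.C, binom4_ratio.
  replace (4 * S k)%nat with (S (S (S (S (4 * k))))) by lia.
  replace (S (S (S (S (4 * k)))) - S k)%nat with (S (S (S (3 * k)))) by lia.
  replace (4 * k - k)%nat with (3 * k)%nat by lia.
  rewrite !fact_simpl, !mult_INR, !S_INR, !mult_INR.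
  pose proof (INR_fact_neq_0 (3 * k)). pose proof (INR_fact_neq_0 k).
  pose proof (pos_INR k). simpl INR.
  field. repeat split; try lra; apply INR_fact_neq_0.
Qed.

Lemma binom4_ratio_bounds k : 0 <= binom4_ratio k <= 256 / 27.
Proof.
  unfold binom4_ratio. pose proof (pos_INR k) as H. set (K := INR k) in *.
  assert (D : 0 < (K + 1) * (3 * K + 1) * (3 * K + 2) * (3 * K + 3))
    by (repeat apply Rmult_lt_0_compat; lra).
  split.
  - apply Rdiv_le_0_compat; [|exact D]. repeat apply Rmult_le_pos; lra.
  - apply Rle_div_l; [exact D|].
    assert ((4 * K + 1) * (4 * K + 2) * (4 * K + 3) <=
            (4 / 3 * (3 * K + 1)) * (4 / 3 * (3 * K + 2)) * (4 / 3 * (3 * K + 3)))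
      by (repeat apply Rmult_le_compat; try lra; apply Rmult_le_pos; lra).
    assert (0 <= (4 * K + 1) * (4 * K + 2) * (4 * K + 3))
      by (repeat apply Rmult_le_pos; lra).
    nra.
Qed.

Lemma binom_4k_k_bounds k : 0 <= binom (4 * k) k <= (256 / 27) ^ k.
Proof.
  induction k as [|k IH]; [unfold binom, Binomial.C; simpl; lra|].
  rewrite binom_4k_k_succ, <- tech_pow_Rmult. pose proof (binom4_ratio_bounds k).
  split; [apply Rmult_le_pos; lra|].
  rewrite Rmult_comm. apply Rmult_le_compat; lra.
Qed.

Lemma rho_abs_le k : Rabs (rho k) <= 3.
Proof.
  unfold rho. destruct (nat_0_or_ge1 k) as [H|H].
  - rewrite H, Rabs_left; field_simplify; lra.
  - set (K := INR k) in *.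
    assert (D : 0 < (2 * K - 1) * (4 * K - 1) * (4 * K - 3))
      by (repeat apply Rmult_lt_0_compat; lra).
    rewrite Rabs_right by (left; apply Rdiv_lt_0_compat; nra).
    apply Rle_div_l; [exact D|]. nra.
Qed.

Lemma beta_abs_le k : Rabs (beta k) <= 3 * (256 / 27) ^ k.
Proof.
  unfold beta. rewrite <- binom_choose by lia. pose proof (binom_4k_k_bounds k).
  rewrite Rabs_mult, (Rabs_right (binom _ _)) by lra.
  apply Rmult_le_compat; [apply Rabs_pos|lra|apply rho_abs_le|lra].
Qed.

Definition binom4 (k : nat) : R := binom (4 * k) k / 16 ^ k.

Lemma binom4_S k : binom4 (S k) = binom4 k * binom4_ratio k / 16.
Proof.
  unfold binom4. rewrite binom_4k_k_succ. simpl pow. field. apply pow_nonzero. lra.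
Qed.

Lemma binom4_bounds k : 0 <= binom4 k <= (16 / 27) ^ k.
Proof.
  unfold binom4. pose proof (binom_4k_k_bounds k). assert (0 < 16 ^ k) by (apply pow_lt; lra).
  replace ((16 / 27) ^ k) with ((256 / 27) ^ k / 16 ^ k).
  - split; [apply Rdiv_le_0_compat; lra|].
    apply Rmult_le_compat_r; [left; apply Rinv_0_lt_compat|]; lra.
  - unfold Rdiv at 1. rewrite <- pow_inv, <- Rpow_mult_distr. f_equal. field.
Qed.

Lemma is_lim_seq_geom_bound (u : nat -> R) (l K r : R) (n0 : nat) : 0 <= r < 1 ->
  (forall n, (n0 <= n)%nat -> Rabs (u n - l) <= K * r ^ n) -> is_lim_seq u l.
Proof.
  intros Hr Hu.
  assert (Hg : is_lim_seq (fun n => K * r ^ n) 0).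
  { replace (Finite 0) with (Rbar_mult K 0) by (simpl; f_equal; ring).
    apply is_lim_seq_scal_l, is_lim_seq_geom. rewrite Rabs_right; lra. }
  apply (is_lim_seq_le_le_loc (fun n => l - K * r ^ n) u (fun n => l + K * r ^ n)).
  - exists n0. intros n Hn. specialize (Hu n Hn). apply Rabs_le_between in Hu. lra.
  - replace (Finite l) with (Finite (l - 0)) by (f_equal; ring).
    apply is_lim_seq_minus'; [apply is_lim_seq_const|exact Hg].
  - replace (Finite l) with (Finite (l + 0)) by (f_equal; ring).
    apply is_lim_seq_plus'; [apply is_lim_seq_const|exact Hg].
Qed.

Lemma is_series_telescope (F : nat -> R) :
  is_lim_seq F 0 -> is_series (fun k => F (S k) - F k) (- F 0%nat).
Proof.
  intros HF. change (is_lim_seq (sum_n (fun k => F (S k) - F k)) (- F 0%nat)).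
  apply is_lim_seq_ext with (fun N => F (S N) - F 0%nat).
  - intros N. rewrite sum_n_Reals. induction N as [|N IH]; simpl; [reflexivity|].
    rewrite <- IH. ring.
  - replace (Finite (- F 0%nat)) with (Finite (0 - F 0%nat)) by (f_equal; ring).
    apply is_lim_seq_minus'; [|apply is_lim_seq_const].
    apply (is_lim_seq_incr_1 F 0), HF.
Qed.

Lemma is_series_telescope_plus (u v F : nat -> R) (c lv l : R) :
  is_lim_seq F 0 -> is_series v lv -> (forall k, u k = F (S k) - F k + c * v k) ->
  - F 0%nat + c * lv = l -> is_series u l.
Proof.
  intros HF Hv Hu <-.
  refine (is_series_ext _ _ _ (fun k => eq_sym (Hu k)) _).
  apply (is_series_plus _ _ _ _ (is_series_telescope F HF) (is_series_scal c v lv Hv)).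
Qed.

Lemma poly_binom4_lim (P : nat -> R) (c : R) :
  (forall k, Rabs (P k) <= c * (INR k + 1) ^ 2) -> is_lim_seq (fun k => P k * binom4 k) 0.
Proof.
  intros HP. apply (is_lim_seq_geom_bound _ 0 (16 * c) (25 / 27) 0); [lra|].
  intros k _. rewrite Rminus_0_r, Rabs_mult.
  assert (Hlin : INR k + 1 <= 4 * (5 / 4) ^ k).
  { induction k as [|k IH]; [simpl; lra|].
    rewrite S_INR. simpl pow.
    assert (1 <= (5 / 4) ^ k) by (rewrite <- (pow1 k); apply pow_incr; lra). lra. }
  assert (Hsq : (INR k + 1) ^ 2 <= 16 * (25 / 16) ^ k).
  { replace (25 / 16) with ((5 / 4) ^ 2) by field. rewrite <- pow_mult, Nat.mul_comm, pow_mult.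
    replace 16 with (4 ^ 2) by ring. rewrite <- Rpow_mult_distr.
    apply pow_incr. pose proof (pos_INR k). lra. }
  pose proof (binom4_bounds k).
  rewrite (Rabs_right (binom4 k)) by lra.
  replace (16 * c * (25 / 27) ^ k) with (c * (16 * (25 / 16) ^ k) * (16 / 27) ^ k)
    by (replace (25 / 27) with (25 / 16 * (16 / 27)) by field; rewrite Rpow_mult_distr; ring).
  assert (0 <= c) by (specialize (HP 0%nat); pose proof (Rabs_pos (P 0%nat)); simpl in HP; lra).
  apply Rmult_le_compat; try lra; [apply Rabs_pos|].
  eapply Rle_trans; [apply HP|]. apply Rmult_le_compat_l; lra.
Qed.

Lemma pow_le_scaled (y lam : R) (N n : nat) : 0 <= y -> 1 <= lam -> (N <= n)%nat ->
  y ^ n <= (/ lam) ^ N * (lam * y) ^ n.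
Proof.
  intros Hy Hlam HNn.
  assert (0 < lam ^ N) by (apply pow_lt; lra).
  assert (lam ^ N <= lam ^ n) by (apply Rle_pow; assumption).
  assert (0 <= y ^ n) by (apply pow_le, Hy).
  rewrite pow_inv, Rpow_mult_distr.
  apply (Rmult_le_reg_l (lam ^ N)); [assumption|].
  field_simplify; [nra|lra].
Qed.

Lemma geometric_sum_le (q : R) (N : nat) : 0 <= q < 1 ->
  sum_f_R0 (fun k => q ^ k) N <= 1 / (1 - q).
Proof.
  intros Hq. rewrite tech3 by lra.
  assert (0 <= q ^ S N) by (apply pow_le; lra).
  apply Rmult_le_compat_r; [left; apply Rinv_0_lt_compat|]; lra.
Qed.

Lemma sum_abs_beta_le (z : R) (N : nat) : 0 <= z -> 256 / 27 * z * (1 + z) ^ 3 < 1 ->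
  sum_f_R0 (fun k => Rabs (beta k) * z ^ k * (1 + z) ^ (3 * k)) N <=
  3 / (1 - 256 / 27 * z * (1 + z) ^ 3).
Proof.
  intros Hz Hq. set (q := 256 / 27 * z * (1 + z) ^ 3) in *.
  assert (0 <= q) by (unfold q; apply Rmult_le_pos; [lra|apply pow_le; lra]).
  apply Rle_trans with (sum_f_R0 (fun k => q ^ k * 3) N).
  - apply sum_Rle. intros k _.
    replace (q ^ k * 3) with (3 * (256 / 27) ^ k * (z ^ k * (1 + z) ^ (3 * k)))
      by (unfold q; rewrite pow_mult, !Rpow_mult_distr; ring).
    rewrite Rmult_assoc. apply Rmult_le_compat_r; [|apply beta_abs_le].
    apply Rmult_le_pos; apply pow_le; lra.
  - rewrite <- scal_sum. replace (3 / (1 - q)) with (3 * (1 / (1 - q))) by (unfold Rdiv; ring).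
    apply Rmult_le_compat_l; [lra|]. apply geometric_sum_le. lra.
Qed.

Section Cubic_substitution.

Variables y lam : R.
Hypothesis y_ge0 : 0 <= y.
Hypothesis lam_gt1 : 1 < lam.
(* Absolute convergence of the double series at [lam * y]; the margin [lam > 1] makes
   the part of the [N]-th partial sum beyond the diagonal [k + j = N] decay like [lam ^ -N]. *)
Hypothesis abs_conv : 256 / 27 * (lam * y) * (1 + lam * y) ^ 3 < 1.

Definition expansion_term (k j : nat) : R :=
  beta k * choose (3 * k) j * (-1) ^ j * y ^ (k + j).

Definition tail (N : nat) : R :=
  sum_f_R0 (fun k =>
    sum_f_R0 (fun j => if (N <? k + j)%nat then expansion_term k j else 0) (3 * N)) N.

Lemma beta_power_expansion k M : (3 * k <= M)%nat ->
  beta k * (y * (1 - y) ^ 3) ^ k = sum_f_R0 (expansion_term k) M.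
Proof.
  intros HM. rewrite Rpow_mult_distr, <- pow_mult.
  replace (1 - y) with (1 + -1 * y) by ring. rewrite <- (choose_expansion _ M _ HM).
  rewrite <- Rmult_assoc, scal_sum. apply sum_eq. intros j _.
  unfold expansion_term. rewrite pow_add, Rpow_mult_distr. ring.
Qed.

Lemma partial_sum_split N :
  sum_f_R0 (fun k => beta k * (y * (1 - y) ^ 3) ^ k) N =
  sum_f_R0 (fun n => coeff n * y ^ n) N + tail N.
Proof.
  rewrite (sum_eq _ (fun k => sum_f_R0 (expansion_term k) (3 * N)))
    by (intros k Hk; apply beta_power_expansion; lia).
  rewrite sum_f_R0_square_split by lia. unfold tail. f_equal.
  apply sum_eq. intros n _. unfold coeff. rewrite Rmult_comm, scal_sum. apply sum_eq. intros k Hk.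
  unfold expansion_term. replace (k + (n - k))%nat with n by lia. ring.
Qed.

Lemma tail_term_abs_le N k j :
  Rabs (if (N <? k + j)%nat then expansion_term k j else 0) <=
  (/ lam) ^ N * (Rabs (beta k) * choose (3 * k) j * (lam * y) ^ (k + j)).
Proof.
  pose proof (Rabs_pos (beta k)). pose proof (choose_ge0 (3 * k) j).
  assert (0 <= (/ lam) ^ N) by (apply pow_le; left; apply Rinv_0_lt_compat; lra).
  assert (0 <= (lam * y) ^ (k + j)) by (apply pow_le; nra).
  destruct (N <? k + j)%nat eqn:E.
  - apply Nat.ltb_lt in E. unfold expansion_term.
    rewrite !Rabs_mult, pow_1_abs, (Rabs_right (choose _ _)), (Rabs_right (y ^ _))
      by (apply Rle_ge; try apply pow_le; assumption).
    replace ((/ lam) ^ N * (Rabs (beta k) * choose (3 * k) j * (lam * y) ^ (k + j))) with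
      (Rabs (beta k) * choose (3 * k) j * 1 * ((/ lam) ^ N * (lam * y) ^ (k + j))) by ring.
    apply Rmult_le_compat_l; [apply Rmult_le_pos; [apply Rmult_le_pos|]; lra|].
    apply pow_le_scaled; lia || lra.
  - rewrite Rabs_R0. apply Rmult_le_pos; [assumption|].
    apply Rmult_le_pos; [apply Rmult_le_pos|]; assumption.
Qed.

Lemma tail_abs_le N :
  Rabs (tail N) <= 3 / (1 - 256 / 27 * (lam * y) * (1 + lam * y) ^ 3) * (/ lam) ^ N.
Proof.
  assert (Hbeta := sum_abs_beta_le (lam * y) N ltac:(nra) abs_conv).
  unfold tail. eapply Rle_trans; [apply sum_f_R0_triangle|].
  eapply Rle_trans.
  { apply sum_Rle. intros k _. eapply Rle_trans; [apply sum_f_R0_triangle|].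
    apply sum_Rle. intros j _. apply tail_term_abs_le. }
  rewrite (sum_eq _
    (fun k => Rabs (beta k) * (lam * y) ^ k * (1 + lam * y) ^ (3 * k) * (/ lam) ^ N)).
  - rewrite <- scal_sum, Rmult_comm. apply Rmult_le_compat_r; [|exact Hbeta].
    apply pow_le. left. apply Rinv_0_lt_compat. lra.
  - intros k Hk. rewrite <- (choose_expansion (3 * k) (3 * N) (lam * y)) by lia.
    rewrite Rmult_assoc, (Rmult_comm (sum_f_R0 _ _)), !scal_sum.
    apply sum_eq. intros j _. rewrite pow_add. ring.
Qed.

Lemma is_series_beta_cubic :
  is_series (fun k => beta k * (y * (1 - y) ^ 3) ^ k)
    (-1 + 28 / 3 * y - 40 / 3 * y ^ 2 + 16 / 3 * y ^ 3).
Proof.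
  assert (Hinv : 0 < / lam < 1).
  { split; [apply Rinv_0_lt_compat; lra|]. rewrite <- Rinv_1. apply Rinv_lt_contravar; lra. }
  apply (is_lim_seq_geom_bound _ _ (3 / (1 - 256 / 27 * (lam * y) * (1 + lam * y) ^ 3))
           (/ lam) 3); [lra|].
  intros N HN. rewrite sum_n_Reals, partial_sum_split, sum_coeff_pow by exact HN.
  replace (_ + tail N - _) with (tail N) by ring. apply tail_abs_le.
Qed.

End Cubic_substitution.

Definition third_term (k : nat) : R :=
  (22 * INR k ^ 2 - 18 * INR k + 3) * binom (4 * k) k
  / ((2 * INR k - 1) * (4 * INR k - 1) * (4 * INR k - 3) * 16 ^ k).

Lemma cubic_root_exists :
  exists y, 8 / 100 <= y <= 81 / 1000 /\ 8 * y ^ 3 - 20 * y ^ 2 + 14 * y - 1 = 0.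
Proof.
  destruct (IVT (fun z => 8 * z ^ 3 - 20 * z ^ 2 + 14 * z - 1) (8 / 100) (81 / 1000))
    as (y & Hy & Hroot); [reg|lra|simpl; lra|simpl; lra|].
  exists y. split; assumption.
Qed.

Lemma third_term_eq k : third_term k = beta k * (/ 16) ^ k.
Proof.
  unfold third_term, beta, rho. rewrite <- binom_choose, pow_inv by lia.
  destruct (denominators_neq0 k) as (D1 & D2 & D3 & D4).
  assert (16 ^ k <> 0) by (apply pow_nonzero; lra).
  field. auto.
Qed.

Lemma is_series_third : is_series third_term (- (1 / 3)).
Proof.
  destruct cubic_root_exists as (y & Hy & Hroot).
  assert (Hx : y * (1 - y) ^ 3 = / 16).
  { assert (Hfactor : 16 * (y * (1 - y) ^ 3) - 1 =
                      (1 - 2 * y) * (8 * y ^ 3 - 20 * y ^ 2 + 14 * y - 1)) by ring.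
    rewrite Hroot in Hfactor. lra. }
  assert (Hconv : 256 / 27 * (101 / 100 * y) * (1 + 101 / 100 * y) ^ 3 < 1).
  { set (v := 101 / 100 * y).
    assert (0 <= v <= 819 / 10000) by (unfold v; lra).
    assert ((1 + v) ^ 3 <= (1 + 819 / 10000) ^ 3) by (apply pow_incr; lra).
    assert (0 <= (1 + v) ^ 3) by (apply pow_le; lra).
    simpl in *. nra. }
  pose proof (is_series_beta_cubic y (101 / 100) ltac:(lra) ltac:(lra) Hconv) as H.
  rewrite Hx in H.
  replace (-1 + 28 / 3 * y - 40 / 3 * y ^ 2 + 16 / 3 * y ^ 3) with (- (1 / 3)) in H by lra.
  exact (is_series_ext _ _ _ (fun k => eq_sym (third_term_eq k)) H).
Qed.

Lemma abs_div_le (a b c : R) : 0 < b -> Rabs a <= c * b -> Rabs (a / b) <= c.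
Proof.
  intros Hb Ha. unfold Rdiv. rewrite Rabs_mult, Rabs_inv, (Rabs_right b) by lra.
  apply Rle_div_l; assumption.
Qed.

Definition first_cert (k : nat) : R :=
  (36 - 384 * INR k ^ 2) * (3 * INR k - 1) * (3 * INR k - 2) /
  ((4 * INR k - 1) * (4 * INR k - 2) * (4 * INR k - 3)).

Definition second_cert (k : nat) : R :=
  (-24 + 156 * INR k - 192 * INR k ^ 2) * INR k /
  ((4 * INR k - 1) * (4 * INR k - 2) * (4 * INR k - 3)).

Lemma first_cert_abs_le k : Rabs (first_cert k) <= 400 * (INR k + 1) ^ 2.
Proof.
  unfold first_cert. destruct (nat_0_or_ge1 k) as [H|H].
  - rewrite H. rewrite Rabs_left; field_simplify; lra.
  - set (K := INR k) in *.
    apply abs_div_le; [repeat apply Rmult_lt_0_compat; lra|].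
    rewrite Rmult_assoc. set (P := (3 * K - 1) * (3 * K - 2)).
    set (D := (4 * K - 1) * (4 * K - 2) * (4 * K - 3)).
    assert (HP : 0 <= P <= D).
    { assert (P <= (4 * K - 1) * (4 * K - 2)) by (unfold P; nra).
      assert (0 <= (4 * K - 1) * (4 * K - 2)) by nra.
      unfold P, D in *. split; nra. }
    assert (HK : 0 <= 384 * K ^ 2 - 36 <= 400 * (K + 1) ^ 2) by (simpl; nra).
    rewrite Rabs_mult, Rabs_left1, (Rabs_right P) by lra.
    apply Rle_trans with (400 * (K + 1) ^ 2 * P); [|apply Rmult_le_compat_l]; nra.
Qed.

Lemma second_cert_abs_le k : Rabs (second_cert k) <= 400 * (INR k + 1) ^ 2.
Proof.
  unfold second_cert. destruct (nat_0_or_ge1 k) as [H|H].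
  - rewrite H. unfold Rdiv. rewrite !Rmult_0_r, Rmult_0_l, Rabs_R0. lra.
  - set (K := INR k) in *.
    apply abs_div_le; [repeat apply Rmult_lt_0_compat; lra|].
    set (D := (4 * K - 1) * (4 * K - 2) * (4 * K - 3)).
    assert (HD : K <= D).
    { assert (K <= (4 * K - 1) * (4 * K - 2)) by nra.
      unfold D. nra. }
    assert (HK : 0 <= 192 * K ^ 2 - 156 * K + 24 <= 400 * (K + 1) ^ 2) by (simpl; nra).
    rewrite Rabs_mult, Rabs_left1, (Rabs_right K) by (simpl; nra).
    apply Rle_trans with (400 * (K + 1) ^ 2 * K); [|apply Rmult_le_compat_l]; nra.
Qed.

Lemma first_term_telescopes k :
  (22 * INR k ^ 2 + 17 * INR k - 2) * binom (4 * k) k / ((INR k + 1) * 16 ^ k) =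
  first_cert (S k) * binom4 (S k) - first_cert k * binom4 k + -15 * third_term k.
Proof.
  rewrite binom4_S. unfold third_term, binom4, binom4_ratio, first_cert. rewrite S_INR.
  destruct (denominators_neq0 k) as (D1 & D2 & D3 & D4). pose proof (pos_INR k).
  assert (16 ^ k <> 0) by (apply pow_nonzero; lra).
  field. repeat split; lra.
Qed.

Lemma second_term_telescopes k :
  (11 * INR k ^ 2 + 8 * INR k + 1) * binom (4 * k) k
  / ((3 * INR k + 1) * (3 * INR k + 2) * 16 ^ k) =
  second_cert (S k) * binom4 (S k) - second_cert k * binom4 k + -3 * third_term k.
Proof.
  rewrite binom4_S. unfold third_term, binom4, binom4_ratio, second_cert. rewrite S_INR.
  destruct (denominators_neq0 k) as (D1 & D2 & D3 & D4). pose proof (pos_INR k).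
  assert (16 ^ k <> 0) by (apply pow_nonzero; lra).
  field. repeat split; lra.
Qed.

Theorem theorem1p3 :
  is_series (fun k : nat =>
      (22 * INR k ^ 2 + 17 * INR k - 2) * binom (4 * k) k
      / ((INR k + 1) * 16 ^ k)) 17
  /\ is_series (fun k : nat =>
      (11 * INR k ^ 2 + 8 * INR k + 1) * binom (4 * k) k
      / ((3 * INR k + 1) * (3 * INR k + 2) * 16 ^ k)) 1
  /\ is_series (fun k : nat =>
      (22 * INR k ^ 2 - 18 * INR k + 3) * binom (4 * k) k
      / ((2 * INR k - 1) * (4 * INR k - 1) * (4 * INR k - 3) * 16 ^ k))
      (- (1 / 3)).
Proof.
  pose proof is_series_third as H3.
  split; [|split; [|exact H3]].
  - apply (is_series_telescope_plus _ _ _ (-15) _ _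
             (poly_binom4_lim first_cert 400 first_cert_abs_le) H3 first_term_telescopes).
    unfold first_cert, binom4, binom, Binomial.C. simpl. field.
  - apply (is_series_telescope_plus _ _ _ (-3) _ _
             (poly_binom4_lim second_cert 400 second_cert_abs_le) H3 second_term_telescopes).
    unfold second_cert, binom4, binom, Binomial.C. simpl. field.
Qed.
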